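(* Let $n\ge2$. Every connected component $C$ of $\widetilde P_0(S_n)$ is isomorphic to the subgraph of $P_0(\mathcal T(S_n))$ induced on the set $\mathcal T(C)$ of types of vertices of $C$ if and only if $2\le n\le 5$.
   Context: $\widetilde P_0(S_n)$: vertex set $\{[x]:x\in S_n\setminus\{\mathrm{id}\}\}$ with $[x]=\{y:\langle y\rangle=\langle x\rangle\}$, distinct $[x],[y]$ adjacent iff some representatives are one a positive power of the other. The type of $[\psi]$ is the partition $T_\psi$ of $n$ given by orbit lengths of $\langle\psi\rangle$. For a partition $T=[m_1^{t_1},\dots,m_k^{t_k}]$, $T^a=[(m_i/\gcd(a,m_i))^{t_i\gcd(a,m_i)}]_i$. $P_0(\mathcal T(S_n))$: vertices the partitions of $n$ other than $[1^n]$, distinct $T,T'$ adjacent iff one is a power of the other. *)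

From Stdlib Require Import Relations.
From mathcomp Require Import all_boot all_fingroup.
Set Implicit Arguments. Unset Strict Implicit. Unset Printing Implicit Defensive.
Local Open Scope group_scope.

Definition is_component (T : Type) (V : T -> Prop) (E : T -> T -> Prop)
  (C : T -> Prop) : Prop :=
  exists v, V v /\
    forall w, C w <-> clos_refl_trans T (fun a b => V a /\ V b /\ E a b) v w.

Definition induced_iso (T U : Type) (C : T -> Prop) (E : T -> T -> Prop)
  (D : U -> Prop) (F : U -> U -> Prop) : Prop :=
  exists f : T -> U,
    (forall a, C a -> D (f a)) /\
    (forall a b, C a -> C b -> f a = f b -> a = b) /\
    (forall u, D u -> exists2 a, C a & f a = u) /\
    (forall a b, C a -> C b -> (E a b <-> F (f a) (f b))).

Definition pclass (n : nat) (x : 'S_n) : {set 'S_n} :=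
  [set y | <[y]> == <[x]>].

Definition tvert (n : nat) (A : {set 'S_n}) : Prop :=
  exists2 x : 'S_n, x != 1 & A = pclass x.

Definition tadj (n : nat) (A B : {set 'S_n}) : Prop :=
  A <> B /\
  exists x y : 'S_n, x \in A /\ y \in B /\
    ((exists k, 0 < k /\ x = y ^+ k)%N \/ (exists k, 0 < k /\ y = x ^+ k)%N).

(* partitions represented as nonincreasing lists of positive parts *)
Definition ptype (n : nat) (psi : 'S_n) : seq nat :=
  sort geq (map (fun X : {set 'I_n} => #|X|) (enum (porbits psi))).

Definition tpow (a : nat) (T : seq nat) : seq nat :=
  sort geq (flatten [seq nseq (gcdn a m) (m %/ gcdn a m) | m <- T]).

Definition padj (T T' : seq nat) : Prop :=
  T <> T' /\
  ((exists a, 0 < a /\ T' = tpow a T)%N \/ (exists a, 0 < a /\ T = tpow a T')%N).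

Definition typesOf (n : nat) (C : {set 'S_n} -> Prop) (t : seq nat) : Prop :=
  exists x : 'S_n, C (pclass x) /\ ptype x = t.

(* For n <= 5 every nontrivial element of S_n lies in a unique maximal cyclic
   subgroup, so an element and all its neighbours share a generator of a largest
   cyclic subgroup containing them; an exhaustive computation confirms that this
   key is constant along edges and that, among nontrivial elements with the same
   key, the type determines the generated subgroup and adjacency of classes is
   adjacency of types.  Taking types is then an isomorphism on each component.
   For n >= 6, x = (0 1)(2 3 4) and its conjugate x' = (0 1)(2 3 5) both have
   (0 1) as a power while neither is a power of the other or of (0 1), so the
   component of [(0 1)] contains two distinct vertices [x], [x'] of the same
   type and has more vertices than types. *)

From Stdlib Require Import Relations.
From mathcomp Require Import all_boot all_fingroup boolp.
Set Implicit Arguments. Unset Strict Implicit. Unset Printing Implicit Defensive.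

Lemma perm_enum_imset (T U : finType) (f : T -> U) (A : {set T}) :
  {in A &, injective f} -> perm_eq (enum (f @: A)) (map f (enum A)).
Proof.
move=> f_inj; apply: uniq_perm; first exact: enum_uniq.
  by rewrite map_inj_in_uniq ?enum_uniq // => u v; rewrite !mem_enum; apply: f_inj.
move=> u; rewrite mem_enum; apply/imsetP/mapP => -[v vA ->]; exists v => //.
  by rewrite mem_enum.
by rewrite -mem_enum.
Qed.

Lemma sort_geq_perm (s1 s2 : seq nat) : perm_eq s1 s2 -> sort geq s1 = sort geq s2.
Proof.
move=> s12; apply/perm_sortP => //.
- by move=> u v; apply: leq_total.
- by move=> u v w uv wu; apply: leq_trans wu uv.
- by move=> u v /andP [uv vu]; apply/anti_leq/andP.
Qed.

Section PowerClasses.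
Variable n : nat.
Implicit Types a b g x y : 'S_n.
Local Open Scope group_scope.

Lemma pclassP x y : (y \in pclass x) = (<[y]> == <[x]>).
Proof. by rewrite inE. Qed.

Lemma pclass_id x : x \in pclass x.
Proof. by rewrite pclassP. Qed.

Lemma pclass_eqE x y : pclass x = pclass y <-> <[x]> = <[y]>.
Proof.
split=> [exy | cxy]; last by apply/setP=> z; rewrite !pclassP cxy.
by apply/eqP; rewrite -pclassP -exy pclass_id.
Qed.

Lemma cycle_repr_pclass x : <[repr (pclass x)]> = <[x]>.
Proof. by apply/eqP; rewrite -pclassP; apply: mem_repr (pclass_id x). Qed.

Lemma mem_cycle_pos_exp a b : a \in <[b]> -> exists k, (0 < k)%N /\ a = b ^+ k.
Proof.
case/cycleP=> k ->; exists (k + #[b])%N; split; first by rewrite addn_gt0 order_gt0 orbT.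
by rewrite expgD expg_order mulg1.
Qed.

Lemma tadj_pclassP a b :
  tadj (pclass a) (pclass b) <-> <[a]> != <[b]> /\ (a \in <[b]> \/ b \in <[a]>).
Proof.
split=> [[ne_ab [x [y [xa [yb xy]]]]] | [ne_ab ab]].
  split; first by apply: contra_not_neq ne_ab => /pclass_eqE.
  move: xa yb; rewrite !pclassP => /eqP xa /eqP yb.
  case: xy => -[k [_ exy]]; [left; rewrite -yb | right; rewrite -xa];
    by rewrite -cycle_subG -?xa -?yb cycle_subG exy mem_cycle.
split; first by move/pclass_eqE=> eab; rewrite eab eqxx in ne_ab.
exists a, b; rewrite !pclass_id; do 2!split=> //.
by case: ab => /mem_cycle_pos_exp ?; [left | right].
Qed.

Lemma ptype_cycle x y : <[x]> = <[y]> -> ptype x = ptype y.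
Proof. by move=> cxy; rewrite /ptype /porbits porbit.unlock cxy. Qed.

Lemma ptype_repr_pclass x : ptype (repr (pclass x)) = ptype x.
Proof. exact/ptype_cycle/cycle_repr_pclass. Qed.

Lemma porbit_conjg x g i : porbit (x ^ g) (g i) = g @: porbit x i.
Proof.
apply/setP=> j; apply/porbitP/imsetP => [[k ->] | [j0 /porbitP [k ->] ->]].
  by exists ((x ^+ k) i); rewrite ?mem_porbit // -conjXg permJ.
by exists k; rewrite -conjXg permJ.
Qed.

Lemma porbits_conjg x g : porbits (x ^ g) = (fun X : {set 'I_n} => g @: X) @: porbits x.
Proof.
apply/setP=> X; apply/imsetP/imsetP => [[j _ ->] | [X0 /imsetP [i _ ->] ->]].
  by exists (porbit x (g^-1 j)); rewrite ?imset_f // -porbit_conjg permKV.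
by exists (g i); rewrite ?porbit_conjg.
Qed.

Lemma ptype_conjg x g : ptype (x ^ g) = ptype x.
Proof.
rewrite /ptype porbits_conjg; apply: sort_geq_perm.
have img_inj : {in porbits x &, injective (fun X : {set 'I_n} => g @: X)}.
  by move=> X Y _ _; apply/imset_inj/perm_inj.
apply: perm_trans (perm_map _ (perm_enum_imset img_inj)) _; rewrite -map_comp.
have card_img (X : {set 'I_n}) : #|g @: X| = #|X| by rewrite card_imset //; apply: perm_inj.
by under eq_map => X do rewrite /= card_img.
Qed.

Lemma ptype_dvdn_fact x m : m \in ptype x -> (m %| n`!)%N.
Proof.
rewrite /ptype mem_sort => /mapP [X]; rewrite mem_enum => /imsetP [i _ ->] ->.
rewrite dvdn_fact // lt0n card_porbit_neq0 /=.
by apply: leq_trans (max_card _) _; rewrite card_ord.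
Qed.
End PowerClasses.

Section InvariantCriterion.
Variables (n : nat) (key : eqType) (K : 'S_n -> key).
Local Open Scope group_scope.

Hypothesis K_tadj : forall a b : 'S_n, a != 1 -> b != 1 ->
  tadj (pclass a) (pclass b) -> K a = K b.
Hypothesis K_ptype_cycle : forall a b : 'S_n, a != 1 -> b != 1 ->
  K a = K b -> ptype a = ptype b -> <[a]> = <[b]>.
Hypothesis K_tadj_padj : forall a b : 'S_n, a != 1 -> b != 1 ->
  K a = K b -> tadj (pclass a) (pclass b) <-> padj (ptype a) (ptype b).

Lemma component_constant_key C : is_component (@tvert n) (@tadj n) C ->
  exists k, forall A, C A -> exists a, [/\ a != 1, A = pclass a & K a = k].
Proof.
case=> _ [[x0 x01 ->] Cx0]; exists (K x0) => A /Cx0.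
pose P A := exists a, [/\ a != 1, A = pclass a & K a = K x0].
suff walk U W : clos_refl_trans _ (fun U W => tvert U /\ tvert W /\ tadj U W) U W ->
  P U -> P W by move/walk; apply; exists x0.
elim=> {A U W} [U W [_ [[b b1 ->] UW]] [a [a1 eU Ka]] | // | U V W _ PV _ PW /PV /PW //].
by exists b; split=> //; rewrite -Ka; symmetry; apply: K_tadj; rewrite // -eU.
Qed.

Lemma component_induced_iso C : is_component (@tvert n) (@tadj n) C ->
  induced_iso C (@tadj n) (typesOf C) padj.
Proof.
move=> /component_constant_key [k Ck].
exists (fun A => ptype (repr A)); split; [|split; [|split]].
- move=> A /[dup] CA /Ck [a [_ eA _]].
  by exists a; rewrite -eA; split=> //; rewrite eA ptype_repr_pclass.
- move=> A B /Ck [a [a1 -> Ka]] /Ck [b [b1 -> Kb]]; rewrite !ptype_repr_pclass.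
  by move=> tab; apply/pclass_eqE/K_ptype_cycle; rewrite ?Ka ?Kb.
- by move=> _ [x [Cx <-]]; exists (pclass x); rewrite ?ptype_repr_pclass.
- move=> A B /Ck [a [a1 -> Ka]] /Ck [b [b1 -> Kb]]; rewrite !ptype_repr_pclass.
  by apply: K_tadj_padj; rewrite ?Ka ?Kb.
Qed.
End InvariantCriterion.

Lemma no_induced_iso_of_ptype_collision n (C : {set 'S_n} -> Prop) (a b : 'S_n) :
  C (pclass a) -> C (pclass b) -> (<[a]> != <[b]>)%g -> ptype a = ptype b ->
  ~ induced_iso C (@tadj n) (typesOf C) padj.
Proof.
move=> Ca Cb ne_ab tab [f [f_into [f_inj _]]].
pose s := enum [set A | `[< C A >]].
have mem_s A : A \in s = `[< C A >] by rewrite mem_enum inE.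
have [sa sb] : pclass a \in s /\ pclass b \in s by rewrite !mem_s; split; apply/asboolP.
have uniq_fs : uniq (map f s).
  rewrite map_inj_in_uniq ?enum_uniq // => A B.
  by rewrite !mem_s => /asboolP CA /asboolP CB; apply: f_inj.
have sub : {subset map f s <= map (fun A => ptype (repr A)) (rem (pclass b) s)}.
  move=> u /mapP [A]; rewrite mem_s => /asboolP /f_into [x [Cx <-]] ->.
  rewrite -ptype_repr_pclass; have [-> | ne_xb] := eqVneq (pclass x) (pclass b).
    rewrite !ptype_repr_pclass -tab -ptype_repr_pclass; apply: map_f.
    rewrite mem_rem_uniq ?enum_uniq // !inE sa andbT.
    by apply: contra ne_ab => /eqP/pclass_eqE ->.
  by apply: map_f; rewrite mem_rem_uniq ?enum_uniq // !inE ne_xb mem_s; apply/asboolP.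
have s_gt0 : (0 < size s)%N by case: (s) sb.
have := uniq_leq_size uniq_fs sub; rewrite !size_map size_rem //.
by case: (size s) s_gt0 => // k _; rewrite ltnn.
Qed.

Section CommonPower.
Variable n : nat.
Implicit Types x y z w : 'S_n.
Local Open Scope group_scope.

Lemma notin_cycle_fixed z w i : z i = i -> w i != i -> w \notin <[z]>.
Proof. by move=> zi; apply: contraNN => /cycleP [k ->]; rewrite permX_fix. Qed.

Lemma no_induced_iso_of_common_power y x x' :
  y != 1 -> y \in <[x]> -> y \in <[x']> -> x \notin <[y]> -> x' \notin <[y]> ->
  x' \notin <[x]> -> ptype x = ptype x' ->
  exists C, is_component (@tvert n) (@tadj n) C /\ ~ induced_iso C (@tadj n) (typesOf C) padj.
Proof.
move=> y1 yx yx' xy x'y x'x txx'.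
pose C A := clos_refl_trans _ (fun U W => tvert U /\ tvert W /\ tadj U W) (pclass y) A.
have vert_y : tvert (pclass y) by exists y.
have C_above z : y \in <[z]> -> z \notin <[y]> -> C (pclass z).
  move=> yz zy; apply: rt_step; split=> //; split.
    by exists z => //; apply: contraNneq zy => ->; apply: group1.
  by apply/tadj_pclassP; split; [apply: contraNneq zy => ->; apply: cycle_id | left].
exists C; split; first by exists (pclass y).
apply: no_induced_iso_of_ptype_collision (C_above _ yx xy) (C_above _ yx' x'y) _ txx'.
by apply: contraNneq x'x => ->; apply: cycle_id.
Qed.
End CommonPower.

Lemma perm_of_nat n (f g : nat -> nat) : (forall i, i < n -> f i < n) -> cancel f g ->
  {s : 'S_n | forall i, val (s i) = f (val i)}.
Proof.
move=> f_lt fK.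
have f_inj : injective (fun i : 'I_n => Ordinal (f_lt i (ltn_ord i))).
  by move=> i j /(congr1 val) /(can_inj fK) /val_inj.
by exists (perm f_inj) => i; rewrite permE.
Qed.

Definition swap01_cycle234 (i : nat) : nat :=
  match i with 0 => 1 | 1 => 0 | 2 => 3 | 3 => 4 | 4 => 2 | _ => i end.
Definition swap01_cycle243 (i : nat) : nat :=
  match i with 0 => 1 | 1 => 0 | 2 => 4 | 3 => 2 | 4 => 3 | _ => i end.
Definition swap45 (i : nat) : nat := match i with 4 => 5 | 5 => 4 | _ => i end.

Lemma swap01_cycle234K : cancel swap01_cycle234 swap01_cycle243.
Proof. by case=> [|[|[|[|[|i]]]]]. Qed.

Lemma swap45K : involutive swap45.
Proof. by case=> [|[|[|[|[|[|i]]]]]]. Qed.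

Section LargeDegree.
Variable m : nat.
Local Notation n := m.+3.+3.
Local Open Scope group_scope.

Lemma large_degree_counterexample :
  exists C, is_component (@tvert n) (@tadj n) C /\ ~ induced_iso C (@tadj n) (typesOf C) padj.
Proof.
have [x xE] : {x : 'S_n | forall i, val (x i) = swap01_cycle234 (val i)}.
  by apply: perm_of_nat swap01_cycle234K; case=> [|[|[|[|[|i]]]]].
have [g gE] : {g : 'S_n | forall i, val (g i) = swap45 (val i)}.
  by apply: perm_of_nat swap45K; case=> [|[|[|[|[|[|i]]]]]].
have xkE k i : val ((x ^+ k) i) = iter k swap01_cycle234 (val i).
  by rewrite permX; elim: k => //= k <-; rewrite xE.
have val_inord k : k < n -> val (inord k : 'I_n) = k by move=> lt_k; apply: inordK.
have ggK i : g (g i) = i by apply: val_inj; rewrite !gE swap45K.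
have g2 : g (inord 2) = inord 2 by apply: val_inj; rewrite gE val_inord.
have g4 : g (inord 4) = inord 5 by apply: val_inj; rewrite gE !val_inord.
pose y := x ^+ 3.
have ygy : y ^ g = y.
  apply/permP=> i; rewrite -{1}(ggK i) permJ; apply: val_inj.
  by rewrite gE !xkE gE; case: (val i) => [|[|[|[|[|[|j]]]]]].
apply: (@no_induced_iso_of_common_power _ y x (x ^ g)).
- apply/eqP => /(congr1 (fun s : 'S_n => val (s (inord 0)))).
  by rewrite /y xkE perm1 val_inord.
- exact: mem_cycle.
- by rewrite -ygy /y conjXg mem_cycle.
- apply: (notin_cycle_fixed (i := inord 2)); first by apply: val_inj; rewrite /y xkE val_inord.
  by apply/eqP => /(congr1 val); rewrite xE val_inord.
- apply: (notin_cycle_fixed (i := inord 2)); first by apply: val_inj; rewrite /y xkE val_inord.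
  by rewrite -{1}g2 permJ; apply/eqP => /(congr1 val); rewrite gE xE !val_inord.
- apply: (notin_cycle_fixed (i := inord 5)); first by apply: val_inj; rewrite xE val_inord.
  by rewrite -{1}g4 permJ; apply/eqP => /(congr1 val); rewrite gE xE !val_inord.
- exact/esym/ptype_conjg.
Qed.
End LargeDegree.

Definition lapp (p : seq nat) i := nth 0 p i.
Definition lmul n (p q : seq nat) := [seq lapp q (lapp p i) | i <- iota 0 n].
Definition lcycle n p := undup (traject (lmul n p) (iota 0 n) n`!).
Definition lorbit n p i := traject (lapp p) i n.
Definition lorbit_min n p i := all (leq i) (lorbit n p i).
Definition ltype n p :=
  sort geq [seq size (undup (lorbit n p i)) | i <- iota 0 n & lorbit_min n p i].

Section ListEncoding.
Variable n : nat.
Implicit Types (a b x y : 'S_n) (i j : 'I_n).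
Local Open Scope group_scope.

Definition perm_list x : seq nat := [seq val (x i) | i <- enum 'I_n].

Lemma lapp_perm_list x i : lapp (perm_list x) (val i) = val (x i).
Proof. by rewrite /lapp (nth_map i) ?nth_ord_enum ?size_enum_ord //; exact: ltn_ord. Qed.

Lemma perm_list_inj : injective perm_list.
Proof. by move=> x y exy; apply/permP=> i; apply: val_inj; rewrite -!lapp_perm_list exy. Qed.

Lemma map_enum_ord (f : 'I_n -> nat) (h : nat -> nat) :
  (forall i, h (val i) = f i) -> [seq f i | i <- enum 'I_n] = map h (iota 0 n).
Proof. by move=> hf; rewrite -val_enum_ord -map_comp; apply: eq_map => i; rewrite /= hf. Qed.

Lemma perm_list1 : perm_list 1 = iota 0 n.
Proof. by rewrite /perm_list (map_enum_ord (h := id)) ?map_id // => i; rewrite perm1. Qed.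

Lemma perm_listM x y : perm_list (x * y) = lmul n (perm_list x) (perm_list y).
Proof. by apply: map_enum_ord => i; rewrite permM !lapp_perm_list. Qed.

Lemma perm_listX x k : perm_list (x ^+ k) = iter k (lmul n (perm_list x)) (iota 0 n).
Proof. by elim: k => [|k IHk]; rewrite ?expg0 ?perm_list1 // expgS perm_listM IHk. Qed.

Lemma perm_list_eq1 x : (x == 1) = (perm_list x == iota 0 n).
Proof. by rewrite -perm_list1 (inj_eq perm_list_inj). Qed.

Lemma mem_cycle_list a b : (a \in <[b]>) = (perm_list a \in lcycle n (perm_list b)).
Proof.
rewrite mem_undup; apply/idP/trajectP => [/cyclePmin [k lt_k ->] | [k _]].
  exists k; last by rewrite perm_listX.
  by apply: leq_trans lt_k _; rewrite -card_Sn max_card.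
by rewrite -perm_listX => /perm_list_inj ->; apply: mem_cycle.
Qed.

Lemma perm_list_permutations x : perm_list x \in permutations (iota 0 n).
Proof.
have -> : perm_list x = map val (map x (enum 'I_n)) by rewrite -map_comp.
rewrite mem_permutations -val_enum_ord; apply/perm_map/uniq_perm.
- by rewrite (map_inj_uniq (@perm_inj _ x)) enum_uniq.
- exact: enum_uniq.
by move=> i; rewrite mem_enum; apply/mapP; exists (x^-1 i); rewrite ?mem_enum ?permKV.
Qed.

Lemma map_val_traject x i m :
  map val (traject x i m) = traject (lapp (perm_list x)) (val i) m.
Proof. by elim: m i => [|m IHm] i //=; rewrite IHm lapp_perm_list. Qed.

Lemma porbit_traject_n x i : porbit x i =i traject x i n.
Proof.
move=> j; apply/idP/trajectP => [| [k _ ->]]; last by rewrite -permX mem_porbit.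
rewrite porbit_traject => /trajectP [k lt_k ->]; exists k => //.
by apply: leq_trans lt_k _; apply: leq_trans (max_card _) _; rewrite card_ord.
Qed.

Lemma card_porbit_list x i : #|porbit x i| = size (undup (lorbit n (perm_list x) (val i))).
Proof.
rewrite /lorbit -map_val_traject undup_map_inj ?size_map; last exact: val_inj.
rewrite -(card_uniqP (undup_uniq _)); apply: eq_card => j.
by rewrite mem_undup porbit_traject_n.
Qed.

Lemma lorbit_minP x i :
  reflect (forall j, j \in porbit x i -> val i <= val j)%N (lorbit_min n (perm_list x) (val i)).
Proof.
rewrite /lorbit_min /lorbit -map_val_traject all_map.
by apply: (iffP allP) => imin j;
  [rewrite porbit_traject_n | rewrite -porbit_traject_n]; apply: imin.
Qed.

Lemma porbits_lorbit_min x :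
  porbits x = porbit x @: [set i | lorbit_min n (perm_list x) (val i)].
Proof.
apply/setP=> X; apply/imsetP/imsetP => [[j _ ->] | [i _ ->]]; last by exists i.
have [i ij imin] := arg_minnP (fun k : 'I_n => val k) (porbit_id x j).
have eij : porbit x i = porbit x j by apply/eqP; rewrite eq_porbit_mem.
by exists i; rewrite // inE; apply/lorbit_minP => k; rewrite eij; apply: imin.
Qed.

Lemma porbit_lorbit_min_inj x :
  {in [set i | lorbit_min n (perm_list x) (val i)] &, injective (porbit x)}.
Proof.
move=> i1 i2; rewrite !inE => /lorbit_minP min1 /lorbit_minP min2 e12.
apply/val_inj/anti_leq; rewrite min1 ?min2 //; first by rewrite -e12 porbit_id.
by rewrite e12 porbit_id.
Qed.

Lemma ptype_list x : ptype x = ltype n (perm_list x).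
Proof.
rewrite /ptype /ltype porbits_lorbit_min.
rewrite (sort_geq_perm (perm_map _ (perm_enum_imset (@porbit_lorbit_min_inj x)))).
congr sort; rewrite -map_comp -val_enum_ord filter_map -map_comp.
rewrite (@eq_enum _ _ [pred i | lorbit_min n (perm_list x) (val i)]) => [|i]; last by rewrite inE.
by rewrite {1}/enum_mem -enumT /= (eq_map (@card_porbit_list x)).
Qed.
End ListEncoding.

Definition lpadj (ds : seq nat) (T T' : seq nat) :=
  (T != T') && (has (fun a => T' == tpow a T) ds || has (fun a => T == tpow a T') ds).

Definition ltadj (cp cq : seq (seq nat)) (p q : seq nat) :=
  ~~ ((p \in cq) && (q \in cp)) && ((p \in cq) || (q \in cp)).

Definition ltable n := [seq (p, lcycle n p) | p <- permutations (iota 0 n)].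

(* The first generator, in the table [tb], of a largest cyclic group containing [p]. *)
Definition lkey (tb : seq (seq nat * seq (seq nat))) (p : seq nat) :=
  let over := [seq e <- tb | p \in e.2] in
  let m := foldr maxn 0 [seq size e.2 | e <- over] in
  head [::] [seq e.1 | e <- over & size e.2 == m].

Record linfo := LInfo {
  li_perm : seq nat; li_cycle : seq (seq nat); li_type : seq nat; li_key : seq nat }.

Definition linfo_of n p := LInfo p (lcycle n p) (ltype n p) (lkey (ltable n) p).

(* The hypotheses of [component_induced_iso] for the key [li_key], on one pair. *)
Definition linfo_pair_ok n ds (u v : linfo) :=
  [|| li_perm u == iota 0 n, li_perm v == iota 0 n |
    (let adj := ltadj (li_cycle u) (li_cycle v) (li_perm u) (li_perm v) in
     if li_key u == li_key v then
       ((li_type u == li_type v) ==> (li_perm u \in li_cycle v) && (li_perm v \in li_cycle u))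
       && (adj == lpadj ds (li_type u) (li_type v))
     else ~~ adj)].

Definition power_check n :=
  let tb := ltable n in
  let infos := [seq LInfo e.1 e.2 (ltype n e.1) (lkey tb e.1) | e <- tb] in
  let ds := divisors n`! in
  all (fun u => all (linfo_pair_ok n ds u) infos) infos.

Lemma power_check_pair n : power_check n ->
  {in permutations (iota 0 n) &,
    forall p q, linfo_pair_ok n (divisors n`!) (linfo_of n p) (linfo_of n q)}.
Proof.
rewrite /power_check /ltable; cbv zeta; rewrite -map_comp all_map => /allP ok p q pP qP.
by have := ok p pP; rewrite /= all_map => /allP; apply.
Qed.

Lemma power_check_small n : (2 <= n <= 5)%N -> power_check n.
Proof. by case: n => [|[|[|[|[|[|n]]]]]] // _; vm_compute. Qed.

Lemma tpow_gcdn a N T : {in T, forall m, m %| N} -> tpow (gcdn a N) T = tpow a T.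
Proof.
move=> TN; rewrite /tpow; congr (sort _ (flatten _)); apply/eq_in_map => m /TN mN.
by rewrite -gcdnA (gcdn_idPr mN).
Qed.

Lemma tpow_divisorsP N T T' : 0 < N -> {in T, forall m, m %| N} ->
  (exists a, 0 < a /\ T' = tpow a T) <-> has (fun a => T' == tpow a T) (divisors N).
Proof.
move=> N_gt0 TN; split=> [[a [a_gt0 ->]] | /hasP [d dP /eqP ->]].
  by apply/hasP; exists (gcdn a N); rewrite ?tpow_gcdn // -dvdn_divisors ?dvdn_gcdr.
move: dP; rewrite -dvdn_divisors // => dN.
by exists d; rewrite (dvdn_gt0 N_gt0 dN).
Qed.

Lemma padj_lpadj N T T' : 0 < N -> {in T, forall m, m %| N} -> {in T', forall m, m %| N} ->
  padj T T' <-> lpadj (divisors N) T T'.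
Proof.
move=> N_gt0 TN T'N; rewrite /padj /lpadj; have [-> | ne_TT'] := eqVneq T T'.
  by split=> // -[].
split=> [[_ [/(tpow_divisorsP _ N_gt0 TN) | /(tpow_divisorsP _ N_gt0 T'N)]] | ]; rewrite /=.
- by move=> ->.
- by move=> ->; rewrite orbT.
by case/orP=> [/(tpow_divisorsP _ N_gt0 TN) | /(tpow_divisorsP _ N_gt0 T'N)] ex_a;
  (split; first exact/eqP); [left | right].
Qed.

Lemma tadj_ltadj n (a b : 'S_n) : tadj (pclass a) (pclass b) <->
  ltadj (lcycle n (perm_list a)) (lcycle n (perm_list b)) (perm_list a) (perm_list b).
Proof.
rewrite tadj_pclassP /ltadj -!mem_cycle_list eqEsubset !cycle_subG.
by split=> [[-> [] ->] | /andP [-> /orP]]; rewrite ?orbT.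
Qed.

Section CheckedDegree.
Variable n : nat.
Hypothesis checked : power_check n.
Local Open Scope group_scope.

Lemma checked_pair (a b : 'S_n) : a != 1 -> b != 1 ->
  let K x := lkey (ltable n) (perm_list x) in
  if K a == K b then
    (ptype a = ptype b -> <[a]> = <[b]>) /\
    (tadj (pclass a) (pclass b) <-> padj (ptype a) (ptype b))
  else ~ tadj (pclass a) (pclass b).
Proof.
move=> a1 b1 K.
have := power_check_pair checked (perm_list_permutations a) (perm_list_permutations b).
rewrite /linfo_pair_ok /= -!perm_list_eq1 (negbTE a1) (negbTE b1) -!ptype_list.
case: ifP => _ /=; last by rewrite tadj_ltadj => /negP.
case/andP=> same_type_cycle /eqP adjE; split.
  move=> tab; move: same_type_cycle; rewrite tab eqxx => /andP [ab ba].
  by apply/eqP; rewrite eqEsubset !cycle_subG !mem_cycle_list ab ba.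
rewrite tadj_ltadj adjE.
by rewrite (padj_lpadj (fact_gt0 n) (@ptype_dvdn_fact n a) (@ptype_dvdn_fact n b)).
Qed.

Lemma checked_component_induced_iso C : is_component (@tvert n) (@tadj n) C ->
  induced_iso C (@tadj n) (typesOf C) padj.
Proof.
apply: (component_induced_iso (K := fun x => lkey (ltable n) (perm_list x))) => a b a1 b1.
- by move=> tab; have /= := checked_pair a1 b1; case: (_ =P _) => // _ /(_ tab).
- by move=> eK; have := checked_pair a1 b1; rewrite /= eK eqxx => -[].
- by move=> eK; have := checked_pair a1 b1; rewrite /= eK eqxx => -[].
Qed.
End CheckedDegree.

Theorem corollary7p9 (n : nat) (hn : (2 <= n)%N) :
  (forall C : {set 'S_n} -> Prop,
     is_component (@tvert n) (@tadj n) C ->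
     induced_iso C (@tadj n) (typesOf C) padj)
  <-> (n <= 5)%N.
Proof.
split.
  case: n hn => [|[|[|[|[|[|m]]]]]] // _ all_iso.
  by have [C [compC no_iso]] := large_degree_counterexample m; case: no_iso; apply: all_iso.
by move=> le_n5; apply/checked_component_induced_iso/power_check_small; rewrite hn.
Qed.
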